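(* There is an absolute constant $C>0$ such that for every integer $n\ge 2$, the cat can localize the mouse up to distance $8$ within time $C\log n$ on the grid $P_n\Box P_n$.
   Context: $P_n\Box P_n$ is the graph with vertex set $[n]\times[n]$ in which $(x,y)$ and $(x',y')$ are adjacent iff $|x-x'|+|y-y'|=1$. All graphs are finite, simple, undirected and connected. The game is played on a graph $G$ in discrete rounds $i=1,2,\ldots$. A game on $G$ is a pair of sequences $((m_i)_{i\in\mathbb N},(c_i)_{i\in\mathbb N})$ of vertices of $G$ such that $m_i\in N_G[m_{i-1}]$ (the closed neighborhood) for every $i\ge 2$; the $m_i$ are the mouse's positions and the $c_i$ (arbitrary vertices) are the cat's probes. Let $d_i=\mathrm{dist}_G(c_i,m_i)$, and for $i\ge2$ let $b_i=1$ if $d_i\le d_{i-1}$ and $b_i=0$ if $d_i>d_{i-1}$. The set $M_i$ is the set of all vertices $u$ for which there exist vertices $\tilde m_1,\ldots,\tilde m_i$ with $\tilde m_i=u$, $\tilde m_j\in N_G[\tilde m_{j-1}]$ for all $2\le j\le i$, and $\mathrm{dist}_G(c_j,\tilde m_j)\le \mathrm{dist}_G(c_{j-1},\tilde m_{j-1})$ if and only if $b_j=1$, for all $2\le j\le i$. For a vertex set $M$, $\mathrm{rad}_G(M)=\min_{u\in V(G)}\max_{m\in M}\mathrm{dist}_G(u,m)$. A strategy for the cat is a triple $(c_1,c_2;f)$ with $c_1,c_2\in V(G)$ and $f:\bigcup_{i\in\mathbb N}\{0,1\}^i\to V(G)$; the cat follows it in a game if its first two probes are $c_1,c_2$ and $c_{i+1}=f(b_2,\ldots,b_i)$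 for all $i\ge2$. The cat can localize the mouse up to distance $d$ within time $t$ on $G$ if there is a strategy $\sigma$ such that for every game on $G$ in which the cat follows $\sigma$, there is a positive integer $i\le t$ with $\mathrm{rad}_G(M_i)\le d$. *)

From mathcomp Require Import all_boot.
From Stdlib Require Import Reals.

Set Implicit Arguments.
Unset Strict Implicit.
Unset Printing Implicit Defensive.

Section Game.
Variables (T : finType) (e : rel T).

Fixpoint nearby (k : nat) (u v : T) : bool :=
  match k with
  | 0 => u == v
  | k'.+1 => nearby k' u v || [exists w, nearby k' u w && e w v]
  end.

(* graph distance: least k with a walk of length <= k (well defined for
   connected graphs, where the distance is < #|T|) *)
Definition gdist (u v : T) : nat := find (fun k => nearby k u v) (iota 0 #|T|).

Definition cnbhd (u v : T) : bool := (v == u) || e u v.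

(* a game: mouse positions m_1, m_2, ... (index 0 unused), cat probes c_i *)
Definition is_game (m c : nat -> T) : Prop :=
  forall i, 2 <= i -> cnbhd (m i.-1) (m i).

Definition bit (m c : nat -> T) (i : nat) : bool :=
  gdist (c i) (m i) <= gdist (c i.-1) (m i.-1).

Definition Mset (m c : nat -> T) (i : nat) (u : T) : Prop :=
  exists mt : nat -> T, mt i = u /\
    forall j, 2 <= j <= i ->
      cnbhd (mt j.-1) (mt j) /\
      (gdist (c j) (mt j) <= gdist (c j.-1) (mt j.-1)) = bit m c j.

Definition rad_le (M : T -> Prop) (d : nat) : Prop :=
  exists u, forall x, M x -> gdist u x <= d.

Record strategy := Strategy {
  st_c1 : T; st_c2 : T; st_f : seq bool -> T }.

Definition follows (s : strategy) (m c : nat -> T) : Prop :=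
  c 1 = st_c1 s /\ c 2 = st_c2 s /\
  forall i, 2 <= i -> c i.+1 = st_f s [seq bit m c j | j <- iota 2 i.-1].

Definition can_localize (d : nat) (t : R) : Prop :=
  exists s : strategy, forall m c : nat -> T,
    is_game m c -> follows s m c ->
    exists i : nat, 0 < i /\ (INR i <= t)%R /\ rad_le (Mset m c i) d.

End Game.

Definition absdiff (a b : nat) : nat := (a - b) + (b - a).

Definition grid_adj (n : nat) : rel ('I_n * 'I_n)%type :=
  fun p q => absdiff p.1 q.1 + absdiff p.2 q.2 == 1.
Arguments grid_adj n : clear implicits.

From mathcomp Require Import all_boot zify.
From Stdlib Require Import Reals Lra.

Set Implicit Arguments.
Unset Strict Implicit.
Unset Printing Implicit Defensive.

(* The cat runs two interleaved binary searches, one per coordinate.  Round k probes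
   (u, s), (v, s), (v, s'): in each of the two comparisons only one coordinate of the probe
   changes and the mouse moves by at most one step, so the first answer tells on which side
   of (u + v) / 2 the mouse's x-coordinate lies and the second on which side of
   (s + s') / 2 its y-coordinate lies.  Allowing for the three moves per round, an interval
   of width w becomes one of width at most (w + 7) / 2, so after about log2 n rounds both
   intervals have width at most 7.  The mouse may still have changed its x-coordinate at
   the very last step, but then its y-coordinate stayed put and the last answer tells which
   way x moved, which is enough to find a centre within distance 8. *)

Definition l1dist (n : nat) (u v : 'I_n * 'I_n) : nat :=
  absdiff u.1 v.1 + absdiff u.2 v.2.

Lemma grid_step_closer (n : nat) (u v : 'I_n.+1 * 'I_n.+1) : 0 < l1dist u v ->
  exists w : 'I_n.+1 * 'I_n.+1, l1dist u w = (l1dist u v).-1 /\ grid_adj n.+1 w v.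
Proof.
case: u v => [a b] [c d]; rewrite /l1dist /grid_adj /absdiff /= => duv.
have := ltn_ord a; have := ltn_ord b; have := ltn_ord c; have := ltn_ord d.
case: (ltngtP c a) => [ca|ac|ac] ? ? ? ?.
- by exists (inord c.+1, d); rewrite /= inordK; lia.
- by exists (inord c.-1, d); rewrite /= inordK; lia.
case: (ltngtP d b) => [db|bd|bd].
- by exists (c, inord d.+1); rewrite /= inordK; lia.
- by exists (c, inord d.-1); rewrite /= inordK; lia.
- lia.
Qed.

Lemma nearby_grid (n k : nat) (u v : 'I_n.+1 * 'I_n.+1) :
  nearby (grid_adj n.+1) k u v = (l1dist u v <= k).
Proof.
elim: k v => [|k IH] v /=.
  case: u v => [a b] [c d]; rewrite /l1dist /absdiff /= xpair_eqE.
  apply/andP/idP => [[/eqP -> /eqP ->]|duv]; first lia.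
  by split; apply/eqP/val_inj => /=; lia.
rewrite IH; apply/idP/idP.
  case/orP => [|/existsP [w /andP [+ /eqP]]]; first lia.
  by rewrite IH /l1dist /absdiff; lia.
move=> le_k1; case: (leqP (l1dist u v) k) => [//|kuv].
have [w [uw wv]] := grid_step_closer (leq_ltn_trans (leq0n k) kuv).
by apply/orP; right; apply/existsP; exists w; rewrite IH uw wv andbT; lia.
Qed.

Lemma find_leq_iota d a m : a <= d < a + m -> find (leq d) (iota a m) = d - a.
Proof.
elim: m a => [|m IH] a dam /=; first lia.
by case: leqP => da; [lia | rewrite IH; lia].
Qed.

Lemma gdist_grid (n : nat) (u v : 'I_n * 'I_n) : gdist (grid_adj n) u v = l1dist u v.
Proof.
case: n u v => [[[]] //|n] u v.
rewrite /gdist (eq_find (fun k => nearby_grid k u v)) find_leq_iota ?subn0 //.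
rewrite card_prod card_ord.
case: u v => [a b] [c d]; rewrite /l1dist /absdiff /=.
have := ltn_ord a; have := ltn_ord b; have := ltn_ord c; have := ltn_ord d; nia.
Qed.

Lemma cnbhd_grid (n : nat) (u v : 'I_n * 'I_n) : cnbhd (grid_adj n) u v -> l1dist u v <= 1.
Proof. by case/orP => [/eqP ->|/eqP <-]; rewrite // /l1dist /absdiff !subnn. Qed.

Definition inside (I : nat * nat) (x : nat) : bool := I.1 <= x <= I.2.
Definition width (I : nat * nat) : nat := I.2 - I.1.

Definition bisecting (I p : nat * nat) : bool :=
  (p.1 + p.2 == I.1 + I.2) && [|| p.1.+2 <= p.2, p.2.+2 <= p.1 | I.2 <= I.1.+1].

(* [b] answers whether the mouse is not farther from the probe [p.2] than it was from the
   probe [p.1] one step earlier. *)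
Definition halve (I p : nat * nat) (b : bool) : nat * nat :=
  if p.1.+2 <= p.2 then (if b then ((p.1 + p.2) %/ 2, I.2) else (I.1, (p.1 + p.2) %/ 2))
  else if p.2.+2 <= p.1 then
    (if b then (I.1, (p.1 + p.2).+1 %/ 2) else ((p.1 + p.2).+1 %/ 2, I.2))
  else I.

Ltac case_ifs_lia := repeat (case: ifP => /=); intros; lia.

Lemma halve_sound I p r x0 x y0 y (b : bool) :
  inside I x -> absdiff x0 x + absdiff y0 y <= 1 ->
  (absdiff p.2 x + absdiff r y <= absdiff p.1 x0 + absdiff r y0) = b ->
  inside (halve I p b) x.
Proof. by rewrite /inside /halve /absdiff; case: b; case_ifs_lia. Qed.

Lemma halve_le n I p b : [&& I.1 <= n, I.2 <= n, p.1 <= n & p.2 <= n] ->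
  ((halve I p b).1 <= n) && ((halve I p b).2 <= n).
Proof. by rewrite /halve; case: b; case_ifs_lia. Qed.

Lemma halve_width I p b : bisecting I p -> 2 * width (halve I p b) <= width I + 1.
Proof. by rewrite /bisecting /width /halve; case: b; case_ifs_lia. Qed.

Lemma halve_refines I p (b : bool) y (P Q : Prop) : p.1 <= p.2 -> bisecting I p ->
  (b -> P -> p.1 + p.2 < 2 * y) -> (~~ b -> Q -> 2 * y + 2 <= p.1 + p.2) ->
  let J := halve I p b in J.2 <= J.1.+1 \/ ((b -> P -> J.1 < y) /\ (~~ b -> Q -> y < J.2)).
Proof.
rewrite /bisecting /halve => p_le /andP [/eqP p_sum p_far] b_gt b_lt /=.
case: ifP => p_lt; last by case: ifP => p_gt; [lia | left; lia].
right; case: b b_gt b_lt => b_gt b_lt; split=> // _ PQ /=.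
- by have := b_gt isT PQ; lia.
- by have := b_lt isT PQ; lia.
Qed.

Section Strategy.
Variable n : nat.

(* A round lasts three steps of the mouse. *)
Definition widen (I : nat * nat) : nat * nat := (I.1 - 3, minn (I.2 + 3) n).

(* The second x-probe lies weakly outside [I], so in the following y-comparison the
   x-term of the distance only records the direction of the mouse's horizontal move. *)
Definition probe_left (I : nat * nat) : bool := (I.1 == 0) || (I.2 < n).

Definition xprobes (I : nat * nat) : nat * nat :=
  if probe_left I then (if I.1 == 0 then I.2 else I.2.+1, I.1.-1) else (I.1, n).

Definition yprobes (I : nat * nat) : nat * nat :=
  if (0 < I.1) && (I.2 < n) then (I.1.-1, I.2.+1) else I.

Definition step_state (S : (nat * nat) * (nat * nat)) (bx by_ : bool) :=
  let Ix := widen S.1 in let Iy := widen S.2 in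
  (halve Ix (xprobes Ix) bx, halve Iy (yprobes Iy) by_).

Fixpoint state (bs : nat -> bool) (k : nat) : (nat * nat) * (nat * nat) :=
  if k is k'.+1 then step_state (state bs k') (bs (3 * k').+2) (bs (3 * k').+3)
  else ((0, n), (0, n)).

Definition round_xprobes bs k := xprobes (widen (state bs k).1).
Definition round_yprobes bs k := yprobes (widen (state bs k).2).

Definition gridpt (a b : nat) : 'I_n.+1 * 'I_n.+1 := (inord a, inord b).

Definition probe (bs : nat -> bool) (t : nat) : 'I_n.+1 * 'I_n.+1 :=
  let k := t.-1 %/ 3 in
  match t.-1 %% 3 with
  | 0 => gridpt (round_xprobes bs k).1 (round_yprobes bs k).1
  | 1 => gridpt (round_xprobes bs k).2 (round_yprobes bs k).1
  | _ => gridpt (round_xprobes bs k).2 (round_yprobes bs k).2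
  end.

Lemma eq_state bs1 bs2 k : {in [pred j | 2 <= j <= 3 * k], bs1 =1 bs2} ->
  state bs1 k = state bs2 k.
Proof.
elim: k => [//|k IH] eq_bs /=.
rewrite IH => [|j /andP [? ?]]; last by apply: eq_bs; rewrite inE; lia.
by rewrite !eq_bs // inE; lia.
Qed.

Lemma eq_probe bs1 bs2 t : 0 < t -> {in [pred j | 2 <= j < t], bs1 =1 bs2} ->
  probe bs1 t = probe bs2 t.
Proof.
move=> t_gt0 eq_bs; rewrite /probe /round_xprobes /round_yprobes (@eq_state bs1 bs2) // => j.
by rewrite !inE => ?; apply: eq_bs; rewrite inE; lia.
Qed.

Definition grid_strategy : strategy ('I_n.+1 * 'I_n.+1)%type :=
  Strategy (probe (fun _ => false) 1) (probe (fun _ => false) 2)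
    (fun l => probe (fun j => nth false l (j - 2)) (size l).+2).

Lemma follows_probe m c : follows (grid_adj n.+1) grid_strategy m c ->
  forall t, 0 < t -> c t = probe (bit (grid_adj n.+1) m c) t.
Proof.
case=> [c1 [c2 c_succ]] [//|[|[|t]]] _.
- by rewrite c1; apply: eq_probe => // j; rewrite inE; lia.
- by rewrite c2; apply: eq_probe => // j; rewrite inE; lia.
rewrite c_succ //; set l := map _ _.
have size_l : size l = t.+1 by rewrite size_map size_iota.
change (probe (fun j => nth false l (j - 2)) (size l).+2 =
        probe (bit (grid_adj n.+1) m c) t.+3).
rewrite size_l; apply: eq_probe => // j; rewrite inE => j_lt.
rewrite /l (nth_map 0) ?size_iota ?nth_iota; try lia.
by congr bit; lia.
Qed.

Lemma probe_in_round bs k :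
  [/\ probe bs (3 * k).+1 = gridpt (round_xprobes bs k).1 (round_yprobes bs k).1,
      probe bs (3 * k).+2 = gridpt (round_xprobes bs k).2 (round_yprobes bs k).1 &
      probe bs (3 * k).+3 = gridpt (round_xprobes bs k).2 (round_yprobes bs k).2].
Proof.
rewrite /probe /=.
have -> : (3 * k) %/ 3 = k by lia.
have -> : (3 * k).+1 %/ 3 = k by lia.
have -> : (3 * k).+2 %/ 3 = k by lia.
have -> : (3 * k) %% 3 = 0 by lia.
have -> : (3 * k).+1 %% 3 = 1 by lia.
by have -> : (3 * k).+2 %% 3 = 2 by lia.
Qed.

Lemma inside_widen I x x' : inside I x -> absdiff x x' <= 3 -> x' <= n -> inside (widen I) x'.
Proof. by rewrite /inside /widen /absdiff /=; lia. Qed.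

Definition within (I : nat * nat) : bool := (I.1 <= n) && (I.2 <= n).

Lemma widen_within I : I.1 <= n -> within (widen I).
Proof. by rewrite /within /widen /=; lia. Qed.

Lemma xprobes_within I : within I -> within (xprobes I).
Proof. by rewrite /within /xprobes /probe_left; case_ifs_lia. Qed.

Lemma yprobes_within I : within I -> within (yprobes I).
Proof. by rewrite /within /yprobes; case_ifs_lia. Qed.

Lemma state_within bs k : within (state bs k).1 && within (state bs k).2.
Proof.
elim: k => [|k /andP [/andP [Sx1 _] /andP [Sy1 _]]] /=; first by rewrite /within leqnn.
have wx := widen_within Sx1; have wy := widen_within Sy1.
move: (xprobes_within wx) (yprobes_within wy); move: wx wy; rewrite /within => wx wy px py.
by rewrite !halve_le //; apply/and4P; split; lia.
Qed.

Lemma pairs_within bs k : within (round_xprobes bs k) && within (round_yprobes bs k).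
Proof.
have /andP [/andP [Sx1 _] /andP [Sy1 _]] := state_within bs k.
by rewrite xprobes_within ?yprobes_within ?widen_within.
Qed.

Lemma xprobes_bisecting I : I.2 <= n -> bisecting I (xprobes I).
Proof. by rewrite /bisecting /xprobes /probe_left; case_ifs_lia. Qed.

Lemma yprobes_bisecting I : bisecting I (yprobes I).
Proof. by rewrite /bisecting /yprobes; case_ifs_lia. Qed.

Lemma state_width bs k : let S := state bs k in let S' := state bs k.+1 in
  2 * width S'.1 <= width S.1 + 7 /\ 2 * width S'.2 <= width S.2 + 7.
Proof.
have /andP [/andP [_ Sx2] _] := state_within bs k.
have := halve_width (bs (3 * k).+2)
                    (xprobes_bisecting (I := widen (state bs k).1) (geq_minr _ _)).
have := halve_width (bs (3 * k).+3) (yprobes_bisecting (widen (state bs k).2)).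
by rewrite /= /step_state /width /widen /=; lia.
Qed.

Lemma state_narrow bs K : n < expn 2 K ->
  width (state bs K).1 <= 7 /\ width (state bs K).2 <= 7.
Proof.
move=> K_large.
have shrink k : expn 2 k * (width (state bs k).1 - 7) <= n /\
                expn 2 k * (width (state bs k).2 - 7) <= n.
  elim: k => [|k [IHx IHy]]; first by rewrite /width /=; lia.
  have [wx wy] := state_width bs k; rewrite expnS -!mulnA.
  by split; [apply: leq_trans IHx | apply: leq_trans IHy]; rewrite mulnCA leq_mul2l; lia.
have [sx sy] := shrink K.
by split; case: leqP => // w_gt; nia.
Qed.

Lemma l1dist_gridpt a b (v : 'I_n.+1 * 'I_n.+1) : a <= n -> b <= n ->
  l1dist (gridpt a b) v = absdiff a v.1 + absdiff b v.2.
Proof. by move=> a_le b_le; rewrite /l1dist /gridpt /= !inordK. Qed.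

(* Shifted towards the side to which, by the last answer, the x-coordinate may have moved. *)
Definition final_center bs K : 'I_n.+1 * 'I_n.+1 :=
  let S := state bs K.+1 in
  let b := bs (3 * K).+3 in
  gridpt (if probe_left (widen (state bs K).1) == b then S.1.2 - 4
          else minn (S.1.1 + 4) (minn (S.1.2 + 1) n))
         (if b then S.2.2 - 3 else minn (S.2.1 + 3) S.2.2).

End Strategy.

Definition unit_step (right : bool) (x x' : nat) : Prop :=
  if right then x' = x.+1 else x'.+1 = x.

Lemma final_center_close (n : nat) (r b : bool) (I J : nat * nat) x x' y :
  inside I x -> width I <= 7 -> absdiff x x' <= 1 -> x' <= n ->
  inside J y -> width J <= 7 ->
  J.2 <= J.1.+1 \/ ((b -> unit_step r x x' -> J.1 < y) /\
                    (~~ b -> unit_step (~~ r) x x' -> y < J.2)) ->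
  absdiff (if r == b then I.2 - 4 else minn (I.1 + 4) (minn (I.2 + 1) n)) x' +
  absdiff (if b then J.2 - 3 else minn (J.1 + 3) J.2) y <= 8.
Proof.
rewrite /inside /width /absdiff /unit_step => /andP [? ?] ? ? ? /andP [? ?] ?.
by case: r b => [] [] /= J_ok; [case: (x' =P x.+1) | case: (x'.+1 =P x)
                                 | case: (x'.+1 =P x) | case: (x' =P x.+1)]; lia.
Qed.

Lemma bit_moves_y q rho sig x2 y2 x3 y3 (b : bool) :
  absdiff x2 x3 + absdiff y2 y3 <= 1 -> rho <= sig ->
  (absdiff q x3 + absdiff sig y3 <= absdiff q x2 + absdiff rho y2) = b ->
  (b -> absdiff q x3 = (absdiff q x2).+1 -> rho + sig < 2 * y3) /\
  (~~ b -> absdiff q x2 = (absdiff q x3).+1 -> 2 * y3 + 2 <= rho + sig).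
Proof. by rewrite /absdiff => ? ? <-; split=> /= ? ?; lia. Qed.

Section Tracking.
Variables (n : nat) (bs : nat -> bool) (c mt : nat -> 'I_n.+1 * 'I_n.+1) (i : nat).
Hypothesis c_probe : forall t, 0 < t -> c t = probe n bs t.
Hypothesis mt_step : forall j, 2 <= j <= i -> l1dist (mt j.-1) (mt j) <= 1.
Hypothesis mt_bit : forall j, 2 <= j <= i ->
  (l1dist (c j) (mt j) <= l1dist (c j.-1) (mt j.-1)) = bs j.

Lemma round_bits k : (3 * k).+3 <= i ->
  let p := round_xprobes n bs k in let q := round_yprobes n bs k in
  (absdiff p.2 (mt (3 * k).+2).1 + absdiff q.1 (mt (3 * k).+2).2 <=
   absdiff p.1 (mt (3 * k).+1).1 + absdiff q.1 (mt (3 * k).+1).2) = bs (3 * k).+2 /\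
  (absdiff p.2 (mt (3 * k).+3).1 + absdiff q.2 (mt (3 * k).+3).2 <=
   absdiff p.2 (mt (3 * k).+2).1 + absdiff q.1 (mt (3 * k).+2).2) = bs (3 * k).+3.
Proof.
move=> k_lt p q.
have /andP [/andP [? ?] /andP [? ?]] := pairs_within n bs k.
have [pr1 pr2 pr3] := probe_in_round n bs k.
rewrite -(mt_bit (j := (3 * k).+2)) -?(mt_bit (j := (3 * k).+3)); try lia.
by rewrite !c_probe // pr1 pr2 pr3 !l1dist_gridpt.
Qed.

Lemma mt_drift j d : 0 < j -> j + d <= i ->
  absdiff (mt j).1 (mt (j + d)).1 <= d /\ absdiff (mt j).2 (mt (j + d)).2 <= d.
Proof.
move=> j_gt0; elim: d => [|d IH] jd; first by rewrite addn0 /absdiff !subnn.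
have [IHx IHy] := IH ltac:(lia); have := mt_step (j := (j + d).+1).
by rewrite addnS /l1dist /absdiff /= in IHx IHy *; lia.
Qed.

(* The x-comparison of a round ends one step before its y-comparison. *)
Definition tracks k : Prop :=
  inside (state n bs k).1 (mt (3 * k).-1).1 /\ inside (state n bs k).2 (mt (3 * k)).2.

Lemma tracks_widen k : (3 * k).+3 <= i -> tracks k ->
  inside (widen n (state n bs k).1) (mt (3 * k).+2).1 /\
  inside (widen n (state n bs k).2) (mt (3 * k).+3).2.
Proof.
move=> k_lt [Sx Sy]; have := ltn_ord (mt (3 * k).+2).1; have := ltn_ord (mt (3 * k).+3).2.
case: (posnP k) => [-> ? ?|k_gt0 y_le x_le]; first by rewrite /inside /widen /=; lia.
have [dx _] := mt_drift (j := (3 * k).-1) (d := 3) ltac:(lia) ltac:(lia).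
have [_ dy] := mt_drift (j := 3 * k) (d := 3) ltac:(lia) ltac:(lia).
rewrite (_ : (3 * k).-1 + 3 = (3 * k).+2) ?addn3 in dx dy; last lia.
by split; [exact: inside_widen Sx dx x_le | exact: inside_widen Sy dy y_le].
Qed.

Lemma tracks_succ k : (3 * k).+3 <= i -> tracks k -> tracks k.+1.
Proof.
move=> k_lt /(tracks_widen k_lt) [wx wy].
have [bx by_] := round_bits k_lt.
have step2 := mt_step (j := (3 * k).+2) ltac:(lia).
have step3 := mt_step (j := (3 * k).+3) ltac:(lia).
rewrite /tracks (_ : 3 * k.+1 = (3 * k).+3); last lia.
change (state n bs k.+1) with (step_state n (state n bs k) (bs (3 * k).+2) (bs (3 * k).+3)).
split; first exact: halve_sound wx step2 bx.
rewrite /l1dist addnC in step3; rewrite [X in X <= _]addnC [X in _ <= X]addnC in by_.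
exact: halve_sound wy step3 by_.
Qed.

Lemma tracks_all k : 3 * k <= i -> tracks k.
Proof.
elim: k => [_|k IH k_le]; first by rewrite /tracks muln0 /inside /= !leq_ord.
by apply: tracks_succ; [lia | apply: IH; lia].
Qed.

Lemma last_y_refined K : (3 * K).+3 <= i -> tracks K ->
  let J := (state n bs K.+1).2 in let r := probe_left n (widen n (state n bs K).1) in
  let b := bs (3 * K).+3 in
  let x2 := nat_of_ord (mt (3 * K).+2).1 in let x3 := nat_of_ord (mt (3 * K).+3).1 in
  let y3 := nat_of_ord (mt (3 * K).+3).2 in
  J.2 <= J.1.+1 \/ ((b -> unit_step r x2 x3 -> J.1 < y3) /\
                    (~~ b -> unit_step (~~ r) x2 x3 -> y3 < J.2)).
Proof.
move=> K_lt trK J r b x2 x3 y3.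
have [wx wy] := tracks_widen K_lt trK.
have [_ by_] := round_bits K_lt.
have step3 := mt_step (j := (3 * K).+3) ltac:(lia).
have x3_le := ltn_ord (mt (3 * K).+3).1.
have q_eq : (round_xprobes n bs K).2 = if r then (widen n (state n bs K).1).1.-1 else n.
  by rewrite /round_xprobes /xprobes -/r; case: r.
have p_le : (round_yprobes n bs K).1 <= (round_yprobes n bs K).2.
  by move: wy; rewrite /round_yprobes /yprobes /inside; case: ifP => /=; lia.
set p := round_yprobes n bs K.
have [moved_away moved_toward] := bit_moves_y step3 p_le by_.
have away : b -> unit_step r x2 x3 -> p.1 + p.2 < 2 * y3.
  move=> /moved_away + step; apply; move: step wx x3_le.
  by rewrite q_eq {q_eq} /unit_step /inside /absdiff; case: r => /=; lia.
have toward : ~~ b -> unit_step (~~ r) x2 x3 -> 2 * y3 + 2 <= p.1 + p.2.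
  move=> /moved_toward + step; apply; move: step wx x3_le.
  by rewrite q_eq {q_eq away} /unit_step /inside /absdiff; case: r => /=; lia.
exact: halve_refines p_le (yprobes_bisecting _ _) away toward.
Qed.

Lemma last_round_close K : (3 * K).+3 <= i ->
  width (state n bs K.+1).1 <= 7 -> width (state n bs K.+1).2 <= 7 ->
  l1dist (final_center n bs K) (mt (3 * K).+3) <= 8.
Proof.
move=> K_lt narrow_x narrow_y.
have trK := tracks_all (k := K) ltac:(lia).
have [tx ty] := tracks_succ K_lt trK.
rewrite (_ : 3 * K.+1 = (3 * K).+3) in tx ty; last lia.
have /andP [/andP [? ?] /andP [? ?]] := state_within n bs K.+1.
have step3 := mt_step (j := (3 * K).+3) ltac:(lia).
rewrite /final_center l1dist_gridpt; try by case: ifP; lia.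
apply: final_center_close tx narrow_x _ _ ty narrow_y (last_y_refined K_lt trK).
- by move: step3; rewrite /l1dist; lia.
- exact: leq_ord.
Qed.

End Tracking.

Lemma INR_expn m k : INR (expn m k) = (INR m ^ k)%R.
Proof. by elim: k => [|k IH]; rewrite ?expn0 // expnS -multE mult_INR IH. Qed.

Lemma ln_le (x y : R) : (0 < x)%R -> (x <= y)%R -> (ln x <= ln y)%R.
Proof.
move=> x_gt0 /Rle_lt_or_eq_dec [x_lt|<-]; last exact: Rle_refl.
exact/Rlt_le/ln_increasing.
Qed.

Lemma round_count_le_log (n K : nat) : 2 <= n -> expn 2 K <= n ->
  (INR (3 * K).+3 <= 6 / ln 2 * ln (INR n))%R.
Proof.
move=> n_ge2 K_le.
have ln2_gt0 : (0 < ln 2)%R by rewrite -ln_1; apply: ln_increasing; lra.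
have n_ge2R : (2 <= INR n)%R by have /leP := n_ge2; move/le_INR.
have K_leR : (INR 2 ^ K <= INR n)%R by rewrite -INR_expn; apply/le_INR/leP.
have K_log : (INR K * ln 2 <= ln (INR n))%R.
  rewrite -ln_pow; last lra.
  by apply: ln_le; [apply: pow_lt; simpl; lra | exact: K_leR].
have log_ge : (ln 2 <= ln (INR n))%R by apply: ln_le; lra.
have K_ge0 := pos_INR K.
rewrite !S_INR -multE mult_INR.
apply: (Rmult_le_reg_r (ln 2)) => //.
replace (6 / ln 2 * ln (INR n) * ln 2)%R with (6 * ln (INR n))%R by (field; lra).
simpl; nra.
Qed.

Theorem theorem2 :
  exists C : R, (0 < C)%R /\
    forall n : nat, 2 <= n ->
      can_localize (grid_adj n) 8 (C * ln (INR n))%R.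
Proof.
have ln2_gt0 : (0 < ln 2)%R by rewrite -ln_1; apply: ln_increasing; lra.
exists (6 / ln 2)%R; split; first by apply: Rdiv_lt_0_compat; lra.
case=> [//|n] n_ge2; exists (grid_strategy n) => m c _ follows_mc.
set bs := bit (grid_adj n.+1) m c; set K := trunc_log 2 n.+1.
have [narrow_x narrow_y] := state_narrow bs (ltnW (@trunc_log_ltn 2 n.+1 isT)).
exists (3 * K).+3; split=> //; split.
  exact: round_count_le_log n_ge2 (@trunc_logP 2 n.+1 isT isT).
exists (final_center n bs K) => _ [mt [<- mt_ok]]; rewrite gdist_grid.
apply: (last_round_close (i := (3 * K).+3) (follows_probe follows_mc)) (leqnn _)
         narrow_x narrow_y.
- by move=> j /mt_ok [adj _]; exact: cnbhd_grid.
- by move=> j /mt_ok [_]; rewrite !gdist_grid.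
Qed.
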